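(* Let $(\mathfrak{g}_\sigma,\mathfrak{q})$ be a $CR$-algebra and let $Z\in\sigma(\mathfrak{q})\setminus\mathfrak{q}$ have finite Levi-order $k$. Let $(Z_1,\dots,Z_k)$ be a Levi-sequence for $Z$ of minimal length $k$. Then: (i) $Z_i\in\mathfrak{q}\setminus\sigma(\mathfrak{q})$ for $1\le i\le k$; (ii) if $k>1$, then $[Z,Z_i]\in(\mathfrak{q}+\sigma(\mathfrak{q}))\setminus\mathfrak{q}$ for every $i$; (iii) for every permutation $(i_1,\dots,i_k)$ of $(1,\dots,k)$, the sequence $(Z_{i_1},\dots,Z_{i_k})$ is again a Levi-sequence for $Z$.
   Context: $\mathfrak{g}$ is a finite-dimensional complex Lie algebra, $\sigma$ an anti-$\mathbb{C}$-linear involution of $\mathfrak{g}$, $\mathfrak{g}_\sigma$ its fixed point set (a real form of $\mathfrak{g}$). A $CR$-algebra is a pair $(\mathfrak{g}_\sigma,\mathfrak{q})$ with $\mathfrak{q}$ a complex Lie subalgebra of $\mathfrak{g}$. Higher order commutators are defined recursively by $[X_1,\dots,X_{h-1},X_h]=[[X_1,\dots,X_{h-1}],X_h]$. For $Z\in\sigma(\mathfrak{q})\setminus\mathfrak{q}$, a Levi-sequence for $Z$ is a finite sequence $(Z_1,\dots,Z_k)$ of elements of $\mathfrak{q}$ with $[Z,Z_1,\dots,Z_k]\notin\mathfrak{q}+\sigma(\mathfrak{q})$; $Z$ has finite Levi-order if it admits a Levi-sequence, and its Levi-order is the minimal length of its Levi-sequences. *)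

From HB Require Import structures.
From mathcomp Require Import all_boot all_order all_algebra.
From mathcomp Require Import complex.
From mathcomp Require Import reals.
Set Implicit Arguments. Unset Strict Implicit. Unset Printing Implicit Defensive.
Import Order.TTheory GRing.Theory Num.Theory.
Local Open Scope ring_scope.

Section CRalg.
Variables (C : fieldType) (V : lmodType C).

Definition is_lie_bracket (br : V -> V -> V) : Prop :=
  [/\ (forall (a : C) x y z, br (a *: x + y) z = a *: br x z + br y z),
      (forall (a : C) x y z, br x (a *: y + z) = a *: br x y + br x z),
      (forall x, br x x = 0) &
      (forall x y z, br x (br y z) + br y (br z x) + br z (br x y) = 0)].

Definition is_antilinear_involution (conj : C -> C) (br : V -> V -> V)
    (sigma : V -> V) : Prop :=
  [/\ (forall x y, sigma (x + y) = sigma x + sigma y),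
      (forall (a : C) x, sigma (a *: x) = conj a *: sigma x),
      (forall x, sigma (sigma x) = x) &
      (forall x y, sigma (br x y) = br (sigma x) (sigma y))].

Definition is_lie_subalgebra (br : V -> V -> V) (q : {pred V}) : Prop :=
  [/\ 0 \in q,
      (forall (a : C) x y, x \in q -> y \in q -> a *: x + y \in q) &
      (forall x y, x \in q -> y \in q -> br x y \in q)].

Definition in_sigma (sigma : V -> V) (q : {pred V}) (x : V) : Prop :=
  exists2 y, y \in q & x = sigma y.

Definition in_q_plus_sq (sigma : V -> V) (q : {pred V}) (x : V) : Prop :=
  exists a b, [/\ a \in q, in_sigma sigma q b & x = a + b].

(* iterated commutator [Z, Z_1, ..., Z_k] = [[...[Z, Z_1], ...], Z_k] *)
Definition iter_br (br : V -> V -> V) (Z : V) (s : seq V) : V := foldl br Z s.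

Definition levi_seq (br : V -> V -> V) (sigma : V -> V) (q : {pred V})
    (Z : V) (s : seq V) : Prop :=
  (forall W, W \in s -> W \in q) /\ ~ in_q_plus_sq sigma q (iter_br br Z s).

Definition levi_order (br : V -> V -> V) (sigma : V -> V) (q : {pred V})
    (Z : V) (k : nat) : Prop :=
  (exists s, levi_seq br sigma q Z s /\ size s = k) /\
  (forall s, levi_seq br sigma q Z s -> (k <= size s)%N).

End CRalg.

(** Write [A] for [q + sigma(q)]; minimality of [k] says that every
    [q]-sequence shorter than [k] has its iterated commutator in [A]. By the
    Jacobi identity, exchanging two adjacent entries [x, y] of a [q]-sequence
    of length at most [k] changes the commutator by the commutator of the
    shorter sequence with [[x, y]] in place of [x, y], hence by an element of
    [A]. So modulo [A] the commutator of a minimal Levi-sequence does not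
    depend on the order of its entries, which is (iii). Moving [Z_i] to the
    end gives [[W, Z_i]] with [W] in [A], which would lie in [A] if [Z_i] were
    in [sigma(q)]: this is (i). Moving [Z_i] to the front shows [[Z, Z_i]] is
    not in [q]: this is (ii). *)
From HB Require Import structures.
From mathcomp Require Import all_boot all_order all_algebra.
From mathcomp Require Import complex.
From mathcomp Require Import reals.
From Stdlib Require Import Classical_Prop.
Import Order.TTheory GRing.Theory Num.Theory.
Local Open Scope ring_scope.
Set Implicit Arguments. Unset Strict Implicit.

Lemma perm_eq_adjacent_ind (T : eqType) (R : seq T -> seq T -> Prop) :
    (forall s, R s s) ->
    (forall s1 s2 s3, perm_eq s1 s2 -> R s1 s2 -> R s2 s3 -> R s1 s3) ->
    (forall p x y r, R (p ++ x :: y :: r) (p ++ y :: x :: r)) ->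
  forall s t, perm_eq s t -> R s t.
Proof.
move=> Rrefl Rtrans Rswap.
have Rmove p x u v : R (p ++ x :: u ++ v) (p ++ u ++ x :: v).
  elim: u p => [|y u IHu] p /=; first exact: Rrefl.
  apply: Rtrans (Rswap p x y (u ++ v)) _.
    by rewrite perm_cat2l (perm_catCA [:: x] [:: y]).
  by have := IHu (rcons p y); rewrite !cat_rcons.
suff Rcat p s t : perm_eq s t -> R (p ++ s) (p ++ t) by move=> s t /(Rcat [::]).
elim: s p t => [|x s IHs] p t.
  by rewrite perm_sym => /perm_nilP ->; apply: Rrefl.
move=> xs_t; have xt : x \in t by rewrite -(perm_mem xs_t) mem_head.
move: xs_t; case/splitPr: xt => t1 t2 xs_t.
have s_t12 : perm_eq s (t1 ++ t2).
  by rewrite -(perm_cons x) (perm_trans xs_t) // (perm_catCA t1 [:: x]).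
have := IHs (rcons p x) _ s_t12; rewrite !cat_rcons => Rx.
by apply: Rtrans Rx (Rmove _ _ _ _); rewrite perm_cat2l perm_cons.
Qed.

Section LieCR.
Variables (C : fieldType) (V : lmodType C) (cj : C -> C) (br : V -> V -> V)
  (sigma : V -> V) (q : {pred V}).
Hypotheses (Hbr : is_lie_bracket br) (Hsigma : is_antilinear_involution cj br sigma)
  (Hq : is_lie_subalgebra br q).

Local Notation A := (in_q_plus_sq sigma q).
Local Notation iter := (iter_br br).

Lemma lie_brDl x y z : br (x + y) z = br x z + br y z.
Proof. by case: Hbr => brZDl _ _ _; have := brZDl 1 x y z; rewrite !scale1r. Qed.

Lemma lie_brDr x y z : br z (x + y) = br z x + br z y.
Proof. by case: Hbr => _ brZDr _ _; have := brZDr 1 z x y; rewrite !scale1r. Qed.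

Lemma lie_br0l z : br 0 z = 0.
Proof. by apply: (addrI (br 0 z)); rewrite -lie_brDl !addr0. Qed.

Lemma lie_brNl x z : br (- x) z = - br x z.
Proof. by apply/eqP; rewrite -addr_eq0 -lie_brDl addNr lie_br0l. Qed.

Lemma lie_brC x y : br x y = - br y x.
Proof.
case: Hbr => _ _ brxx _; apply/eqP; rewrite -addr_eq0.
by have := brxx (x + y); rewrite lie_brDl !lie_brDr !brxx add0r addr0 => /eqP.
Qed.

Lemma lie_jacobiB W x y : br (br W x) y - br (br W y) x = br W (br x y).
Proof.
case: Hbr => _ _ _ jacobi; have := jacobi W x y.
rewrite (lie_brC x (br y W)) (lie_brC y (br W x)) (lie_brC y W) lie_brNl opprK.
by move=> cyclic_sum; apply/eqP; rewrite eq_sym -subr_eq0 -cyclic_sum opprB addrA.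
Qed.

Lemma iter_brD x y r : iter (x + y) r = iter x r + iter y r.
Proof. by elim: r x y => //= a r IHr x y; rewrite /iter_br /= lie_brDl; apply: IHr. Qed.

Lemma iter_brN x r : iter (- x) r = - iter x r.
Proof. by elim: r x => //= a r IHr x; rewrite /iter_br /= lie_brNl; apply: IHr. Qed.

Lemma iter_brB x y r : iter (x - y) r = iter x r - iter y r.
Proof. by rewrite iter_brD iter_brN. Qed.

Lemma iter_br_cons x a r : iter x (a :: r) = iter (br x a) r.
Proof. by []. Qed.

Lemma iter_br_cat x u v : iter x (u ++ v) = iter (iter x u) v.
Proof. exact: foldl_cat. Qed.

Lemma iter_br_rcons x u a : iter x (rcons u a) = br (iter x u) a.
Proof. exact: foldl_rcons. Qed.

Lemma lie_sub0 : 0 \in q.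
Proof. by case: Hq. Qed.

Lemma lie_subD x y : x \in q -> y \in q -> x + y \in q.
Proof. by case: Hq => _ qZD _ qx qy; have := qZD 1 x y qx qy; rewrite scale1r. Qed.

Lemma lie_sub_br x y : x \in q -> y \in q -> br x y \in q.
Proof. by case: Hq => _ _; apply. Qed.

Lemma iter_br_lie_sub x r : x \in q -> {subset r <= q} -> iter x r \in q.
Proof.
elim: r x => //= a r IHr x qx qar; apply: IHr => [|w rw].
  by apply: lie_sub_br qx (qar _ (mem_head _ _)).
by apply: qar; rewrite inE rw orbT.
Qed.

Lemma sigmaD x y : sigma (x + y) = sigma x + sigma y.
Proof. by case: Hsigma. Qed.

Lemma sigma0 : sigma 0 = 0.
Proof. by apply: (addrI (sigma 0)); rewrite -sigmaD !addr0. Qed.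

Lemma q_plus_sqD x y : A x -> A y -> A (x + y).
Proof.
move=> [a [b [qa [b' qb' ->] ->]]] [c [d [qc [d' qd' ->] ->]]].
exists (a + c), (sigma (b' + d')); split; first exact: lie_subD.
  by exists (b' + d') => //; apply: lie_subD.
by rewrite sigmaD addrACA.
Qed.

Lemma q_plus_sq_of_q x : x \in q -> A x.
Proof.
move=> qx; exists x, 0; split; rewrite ?addr0 //.
by exists 0; rewrite ?sigma0 //; apply: lie_sub0.
Qed.

Lemma q_plus_sq_of_sigma x : in_sigma sigma q x -> A x.
Proof. by move=> sx; exists 0, x; rewrite add0r; split=> //; apply: lie_sub0. Qed.

Lemma q_plus_sq_br W X : A W -> X \in q -> in_sigma sigma q X -> A (br W X).
Proof.
move=> [a [b [qa [b' qb' ->] ->]]] qX [y qy eX]; rewrite lie_brDl.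
apply: q_plus_sqD; first by apply: q_plus_sq_of_q; apply: lie_sub_br.
apply: q_plus_sq_of_sigma; exists (br b' y); first exact: lie_sub_br.
by case: Hsigma => _ _ _ ->; rewrite eX.
Qed.

Variables (Z : V) (k : nat).
Hypothesis Hk : levi_order br sigma q Z k.

Lemma levi_order_short u : {subset u <= q} -> (size u < k)%N -> A (iter Z u).
Proof.
move=> qu short; apply: NNPP => notA; case: Hk => _ /(_ u (conj qu notA)).
by rewrite leqNgt short.
Qed.

Lemma iter_br_swap p x y r :
    {subset p ++ x :: y :: r <= q} -> (size (p ++ x :: y :: r) <= k)%N ->
  A (iter Z (p ++ x :: y :: r) - iter Z (p ++ y :: x :: r)).
Proof.
move=> qpxyr size_le; rewrite !iter_br_cat !iter_br_cons -iter_brB lie_jacobiB.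
rewrite -iter_br_cons -iter_br_cat.
apply: levi_order_short.
  move=> w; rewrite mem_cat inE => /or3P[pw | /eqP-> | rw].
  - by apply: qpxyr; rewrite mem_cat pw.
  - by apply: lie_sub_br; apply: qpxyr; rewrite mem_cat !inE eqxx ?orbT.
  - by apply: qpxyr; rewrite mem_cat !inE rw !orbT.
by move: size_le; rewrite !size_cat /= !addnS.
Qed.

Lemma iter_br_perm u v : perm_eq u v -> {subset u <= q} -> (size u <= k)%N ->
  A (iter Z u - iter Z v).
Proof.
apply: (@perm_eq_adjacent_ind _ (fun u v =>
  {subset u <= q} -> (size u <= k)%N -> A (iter Z u - iter Z v))).
- by move=> w _ _; rewrite subrr; apply/q_plus_sq_of_q/lie_sub0.
- move=> u1 u2 u3 u12 A12 A23 qu1 size_le.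
  have := q_plus_sqD (A12 qu1 size_le) (A23 _ _); rewrite addrA subrK; apply.
    by move=> w; rewrite -(perm_mem u12); apply: qu1.
  by rewrite -(perm_size u12).
- exact: iter_br_swap.
Qed.

Lemma levi_order_br x : (1 < k)%N -> x \in q -> A (br Z x).
Proof.
move=> k_gt1 qx; apply: (@levi_order_short [:: x]) => // w.
by rewrite inE => /eqP->.
Qed.

Section MinimalLeviSequence.
Variable s : seq V.
Hypotheses (Hs : levi_seq br sigma q Z s) (Hsize : size s = k).
Let s_sub_q : {subset s <= q} := proj1 Hs.

Lemma levi_seq_perm t : perm_eq t s -> levi_seq br sigma q Z t.
Proof.
move=> ts; split=> [w|At]; first by rewrite (perm_mem ts); apply: s_sub_q.
have st : perm_eq s t by rewrite perm_sym.
case: Hs => _; apply; have := q_plus_sqD At (iter_br_perm st s_sub_q _).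
by rewrite addrC subrK Hsize; apply.
Qed.

Lemma levi_seq_rem_short x : x \in s -> A (iter Z (rem x s)).
Proof.
move=> sx; apply: levi_order_short => [w /mem_rem|]; first exact: s_sub_q.
rewrite size_rem // Hsize ltn_predL -Hsize -has_predT.
by apply/hasP; exists x.
Qed.

Lemma levi_seq_notin_sigma x : x \in s -> ~ in_sigma sigma q x.
Proof.
move=> sx sigx; have x_last : perm_eq (rcons (rem x s) x) s.
  by rewrite perm_rcons perm_sym perm_to_rem.
have [_] := levi_seq_perm x_last; apply; rewrite iter_br_rcons.
exact: q_plus_sq_br (levi_seq_rem_short sx) (s_sub_q sx) sigx.
Qed.

Lemma levi_seq_br_notin x : x \in s -> br Z x \notin q.
Proof.
move=> sx; apply/negP => qZx; have x_first : perm_eq (x :: rem x s) s.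
  by rewrite perm_sym perm_to_rem.
have [_] := levi_seq_perm x_first; apply; apply: q_plus_sq_of_q.
rewrite iter_br_cons; apply: iter_br_lie_sub qZx _.
by move=> w /mem_rem; apply: s_sub_q.
Qed.

End MinimalLeviSequence.
End LieCR.

Theorem lemma3p8 (R : realType) (V : vectType R[i])
    (br : V -> V -> V) (sigma : V -> V) (q : {pred V})
    (Hbr : is_lie_bracket br)
    (Hsigma : is_antilinear_involution (@conjc R) br sigma)
    (Hq : is_lie_subalgebra br q)
    (Z : V) (HZs : in_sigma sigma q Z) (HZq : Z \notin q)
    (k : nat) (Hk : levi_order br sigma q Z k)
    (s : seq V) (Hs : levi_seq br sigma q Z s) (Hsize : size s = k) :
  [/\ (forall i, (i < k)%N -> s`_i \in q /\ ~ in_sigma sigma q s`_i),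
      ((1 < k)%N -> forall i, (i < k)%N ->
         in_q_plus_sq sigma q (br Z s`_i) /\ br Z s`_i \notin q) &
      (forall t : seq V, perm_eq t s -> levi_seq br sigma q Z t)].
Proof.
have s_nth i : (i < k)%N -> s`_i \in s by move=> ik; rewrite mem_nth ?Hsize.
have qs : {subset s <= q} by case: Hs.
split=> [i /s_nth si | k_gt1 i /s_nth si | t ts].
- split; first exact: qs.
  exact: (levi_seq_notin_sigma Hbr Hsigma Hq Hk Hs Hsize si).
- split; first exact: (levi_order_br Hk k_gt1 (qs _ si)).
  exact: (levi_seq_br_notin Hbr Hsigma Hq Hk Hs Hsize si).
- exact: (levi_seq_perm Hbr Hsigma Hq Hk Hs Hsize ts).
Qed.
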